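(* Let $X$ and $Y$ be metric spaces and let $f:X\to Y$ be a local homeomorphism. Suppose that $Y$ is $\mathcal P$-connected and locally $\mathcal P$-contractible for some family $\mathcal P$ of paths in $Y$. Then $f$ is a covering projection if and only if $f$ has the continuation property for every path in $\mathcal P$.
   Context: A family $\mathcal P$ of continuous paths $p:[0,1]\to Y$ in a metric space $Y$ is given. $Y$ is $\mathcal P$-connected if (i) whenever $p\in\mathcal P$, the reverse path $\bar p(t)=p(1-t)$ belongs to $\mathcal P$, and (ii) every two points of $Y$ can be joined by a path in $\mathcal P$. $Y$ is locally $\mathcal P$-contractible if every $y_0\in Y$ has an open neighborhood $U$ with a continuous homotopy $H:U\times[0,1]\to U$ such that $H(y_0,t)=y_0$ for all $t$, $H(y,0)=y_0$ and $H(y,1)=y$ for all $y\in U$, and for every $y\in U$ the path $t\mapsto H(y,t)$ belongs to $\mathcal P$. A continuous map $f:X\to Y$ has the continuation property for a path $p:[0,1]\to Y$ if for every $b\in(0,1]$ and every continuous path $q:[0,b)\to X$ with $f\circ q=p$ on $[0,b)$, there exists a sequence $(t_n)$ in $[0,b)$ converging to $b$ such that $(q(t_n))$ converges in $X$. *)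

From HB Require Import structures.
From mathcomp Require Import all_boot all_order all_algebra.
From mathcomp Require Import all_classical all_reals all_analysis.
Set Implicit Arguments. Unset Strict Implicit. Unset Printing Implicit Defensive.
Import Order.TTheory GRing.Theory Num.Theory.
Import numFieldNormedType.Exports.
Local Open Scope classical_set_scope.
Local Open Scope ring_scope.

(* A path in Y is represented by a function p : R -> Y; only its values on
   [0,1] matter.  A family of paths is a set of such functions. *)

Definition in_family {R : realType} {Y : Type} (P : set (R -> Y)) (q : R -> Y) :=
  exists2 p, P p & {in `[0, 1], p =1 q}.

Definition path_family {R : realType} {Y : topologicalType} (P : set (R -> Y)) :=
  forall p, P p -> {within `[0, 1], continuous p}.

Definition P_connected {R : realType} {Y : Type} (P : set (R -> Y)) :=
  (forall p, P p -> in_family P (fun t => p (1 - t))) /\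
  (forall a b : Y, exists2 p, P p & p 0 = a /\ p 1 = b).

Definition locally_P_contractible {R : realType} {Y : topologicalType}
    (P : set (R -> Y)) :=
  forall y0 : Y, exists U : set Y, exists H : Y -> R -> Y,
    [/\ open U /\ U y0,
        {within U `*` `[0, 1], continuous (fun z : Y * R => H z.1 z.2)},
        (forall y t, U y -> t \in `[0, 1] -> U (H y t)),
        (forall t, t \in `[0, 1] -> H y0 t = y0) &
        (forall y, U y -> [/\ H y 0 = y0, H y 1 = y & in_family P (H y)])].

Definition homeo_onto {X Y : topologicalType} (f : X -> Y) (V : set X) (W : set Y) :=
  [/\ set_bij V W f, {within V, continuous f} &
      exists g : Y -> X, [/\ {in W, forall y, V (g y) /\ f (g y) = y} &
                             {within W, continuous g}]].

Definition local_homeomorphism {X Y : topologicalType} (f : X -> Y) :=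
  forall x : X, exists V : set X,
    [/\ open V, V x, open (f @` V) & homeo_onto f V (f @` V)].

Definition evenly_covered {X Y : topologicalType} (f : X -> Y) (U : set Y) :=
  exists (I : Type) (V : I -> set X),
    [/\ forall i, open (V i),
        forall i j, i <> j -> V i `&` V j = set0,
        \bigcup_i V i = f @^-1` U &
        forall i, homeo_onto f (V i) U].

Definition covering_projection {X Y : topologicalType} (f : X -> Y) :=
  continuous f /\
  forall y : Y, exists U : set Y, [/\ open U, U y & evenly_covered f U].

Definition continuation_property {R : realType} {X Y : topologicalType}
    (f : X -> Y) (p : R -> Y) :=
  forall (b : R) (q : R -> X), b \in `]0, 1] ->
    {within `[0, b[, continuous q} ->
    {in `[0, b[, forall t, f (q t) = p t} ->
    exists t : nat -> R,
      [/\ forall n, t n \in `[0, b[, t @ \oo --> b &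
          exists l : X, (q \o t) @ \oo --> l].

(* Both directions rest on path lifting for the local homeomorphism f: lifts
   of a path are unique, and, by a continuous induction along [0, 1], a lift
   with a prescribed starting point exists as soon as f has the continuation
   property for the path -- the continuation property provides a limit point
   at the supremum of the times up to which a lift exists, and a chart of f
   around that point extends the lift beyond it.
   For a covering projection the continuation property is immediate: near
   the end of the path the lift stays in one sheet over an evenly covered
   neighbourhood, where it is the inverse of f applied to the path.
   Conversely, let U be a P-contractible neighbourhood of y0 with contraction
   H.  Lifting the paths H y from each point x over y0 and evaluating at time
   1 gives maps s_x : U -> X; they are continuous by a second continuous
   induction along the homotopy, injective and with disjoint open images by
   uniqueness of lifts, and their images cover f^-1(U) because the reversed
   path of H y can be lifted from any point over y.  So U is evenly covered. *)
From HB Require Import structures.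
From mathcomp Require Import all_boot all_order all_algebra.
From mathcomp Require Import all_classical all_reals all_analysis.
From mathcomp.algebra_tactics Require Import lra.
Set Implicit Arguments. Unset Strict Implicit. Unset Printing Implicit Defensive.
Import Order.TTheory GRing.Theory Num.Theory.
Import numFieldNormedType.Exports.
Local Open Scope classical_set_scope.
Local Open Scope ring_scope.

Lemma within_nearW {T : Type} (F : set_system T) {FF : Filter F} (A B : set T) :
  F (fun v => A v -> B v) -> within A F `=>` within B F.
Proof.
move=> AB P HP; have {}HP : F (fun v => B v -> P v) := HP.
change (F (fun v => A v -> P v)).
apply: filter_app HP; apply: filter_app AB.
by apply: nearW => v h1 h2 Av; apply: h2; apply: h1.
Qed.

Lemma cvg_within_eventually {T U : Type} (F : set_system T) {FF : Filter F}
    (G : set_system U) (t : T -> U) (A : set U) :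
  F (fun n => A (t n)) -> t @ F --> G -> t @ F --> within A G.
Proof.
move=> At tG P HP; have h : (t @ F) (fun v => A v -> P v) := tG _ HP.
change (F (fun n => P (t n))); change (F (fun n => A (t n) -> P (t n))) in h.
exact: filter_app h At.
Qed.

Section real_line.
Variable R : realType.
Implicit Types a b c s t : R.

Lemma real_induction a c (A : R -> Prop) :
  (forall t, a <= t -> t <= c -> (forall s, a <= s -> s < t -> A s) -> A t) ->
  (forall t, a <= t -> t < c -> A t ->
     exists2 e, 0 < e & forall s, t < s -> s < t + e -> s <= c -> A s) ->
  forall t, a <= t -> t <= c -> A t.
Proof.
move=> Hleft Hright t0 at0 t0c; apply: contrapT => nAt0.
pose B := [set t | a <= t /\ t <= c /\ ~ A t].
have lbB : lbound B a by move=> y [].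
have nB : nonempty B by exists t0.
set m := inf B.
have am : a <= m by apply: lb_le_inf.
have mB : lbound B m by apply: ge_inf; exists a.
have mt0 : m <= t0 by apply: mB.
have Am : A m.
  apply: Hleft => //; first exact: le_trans mt0 t0c.
  move=> s a_s sm; apply: contrapT => nAs.
  have : m <= s by apply: mB; split => //; split => //;
    apply: ltW; apply: lt_le_trans sm (le_trans mt0 t0c).
  by rewrite leNgt sm.
have mt0' : m < t0.
  by rewrite lt_neqAle mt0 andbT; apply/eqP => emt; apply: nAt0; rewrite -emt.
have [e e0 He] := Hright m am (lt_le_trans mt0' t0c) Am.
have : m + e <= m.
  apply: lb_le_inf => // y [ay [yc nAy]].
  rewrite leNgt; apply/negP => ylt.
  move: (mB y (conj ay (conj yc nAy))); rewrite le_eqVlt => /orP[/eqP emy|my].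
    by apply: nAy; rewrite -emy.
  by apply: nAy; apply: He.
by rewrite gerDl leNgt e0.
Qed.

Definition Icc a c := [set s : R | a <= s <= c].

Lemma set_itvccE a c : [set` `[a, c]] = Icc a c.
Proof. by apply/seteqP; split => x /=; rewrite in_itv. Qed.

Lemma set_itvco0E b : [set` `[0, b[] = [set u : R | 0 <= u < b].
Proof. by apply/seteqP; split => x /=; rewrite in_itv. Qed.

Lemma closed_Icc a c : closed (Icc a c).
Proof. by rewrite -set_itvccE; apply: interval_closed. Qed.

Lemma Icc_split a b c : a <= b -> b <= c -> Icc a c = Icc a b `|` Icc b c.
Proof.
move=> ab bc; apply/seteqP; split => v; rewrite /Icc /=.
  move=> /andP[h1 h2]; have [vb|bv] := leP v b; [left|right];
    by apply/andP; split; lra.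
by case => /andP[h1 h2]; apply/andP; split; lra.
Qed.

Lemma near_withinP (A : set R) t (P : R -> Prop) :
  (\forall s \near within A (nbhs t), P s) <->
  exists2 e : R, 0 < e & forall s, A s -> `|s - t| < e -> P s.
Proof.
split.
  rewrite /within /= => /nbhs_ballP -[e e0 He]; exists e => // s As st.
  apply: He => //; rewrite -ball_normE /= distrC; exact: st.
move=> [e e0 He]; rewrite /within /=; apply/nbhs_ballP; exists e => // s /= ts As.
apply: He => //; move: ts; rewrite -ball_normE /= distrC; exact.
Qed.

Lemma near_at_left a t (P : R -> Prop) : a < t ->
  (forall s, a < s -> s < t -> P s) -> \forall s \near t^'-, P s.
Proof.
move=> a_t HP; apply/(near_withinP (fun u => u < t)); exists (t - a).
  by rewrite /=; lra.
move=> s st; rewrite ltr_norml => /andP[h1 h2]; apply: HP => //; lra.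
Qed.

Lemma at_left_within_Icc a c t : a < t -> t <= c ->
  t^'- `=>` within (Icc a c) (nbhs t).
Proof.
move=> a_t tc P /near_withinP [e e0 HP].
apply: filter_app (near_at_left a_t (fun s h1 h2 => h1)).
apply/(near_withinP (fun u => u < t)); exists e => // s st hs ha.
by apply: HP => //; rewrite /Icc /= (ltW ha) (le_trans (ltW st) tc).
Qed.

Lemma exists_close_left a t (e : R) : a < t -> 0 < e ->
  exists s, [/\ a <= s, s < t & t - s < e].
Proof.
move=> a_t e0; case: (leP (t - e / 2) a) => h.
  by exists a; split; lra.
by exists (t - e / 2); split; lra.
Qed.

Lemma subr_harmonic_itv s b (n : nat) : s < b ->
  s <= b - (b - s) * n.+1%:R^-1 < b.
Proof.
move=> sb; have k0 : 0 < n.+1%:R^-1 :> R by rewrite invr_gt0 ltr0Sn.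
have k1 : n.+1%:R^-1 <= 1 :> R by rewrite invr_le1 // ?ler1n // unitfE.
move: (n.+1%:R^-1 : R) k0 k1 => k k0 k1.
have p1 : 0 < (b - s) * k by apply: mulr_gt0 => //; lra.
have p2 : (b - s) * k <= b - s by rewrite ler_piMr //; lra.
by apply/andP; split; lra.
Qed.

Lemma cvg_subr_harmonic b (d : R) :
  (fun n : nat => b - d * n.+1%:R^-1) @ \oo --> b.
Proof.
have h : (fun n : nat => d * harmonic n) @ \oo --> d * 0.
  by apply: cvgM; [exact: cvg_cst|exact: cvg_harmonic].
rewrite mulr0 in h.
by have := cvgB (cvg_cst b) h; rewrite subr0; apply.
Qed.

End real_line.

Definition continuous_on {R : realType} {T : topologicalType} (A : set R)
    (q : R -> T) :=
  forall t, A t -> q @ within A (nbhs t) --> q t.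

Section continuous_on.
Variables (R : realType) (T : topologicalType).
Implicit Types (A B : set R) (q h k : R -> T).

Lemma continuous_onP A q : {within A, continuous q} <-> continuous_on A q.
Proof. exact: subspace_continuousP. Qed.

Lemma continuous_onW A B q : B `<=` A -> continuous_on A q -> continuous_on B q.
Proof.
move=> BA /continuous_onP cq; apply/continuous_onP.
exact: continuous_subspaceW cq.
Qed.

Lemma continuous_on_eq A h k :
  (forall v, A v -> h v = k v) -> continuous_on A k -> continuous_on A h.
Proof.
move=> hk /continuous_onP ck; apply/continuous_onP.
apply: subspace_eq_continuous ck.
by move=> v /set_mem Av; exact: (esym (hk v Av)).
Qed.

Lemma continuous_on_cst A (x : T) : continuous_on A (fun=> x).
Proof. by move=> t At; apply: cvg_cst. Qed.

Lemma continuous_on_comp {S : topologicalType} A (p : R -> S) (g : S -> T)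
    (W : set S) :
  continuous_on A p -> (forall v, A v -> W (p v)) -> {in W, continuous g} ->
  continuous_on A (g \o p).
Proof.
move=> cp pW cg u Au; apply: continuous_cvg; last exact: cp.
by apply: cg; apply: mem_set; exact: pW.
Qed.

Lemma continuous_on_setU A B q : closed A -> closed B ->
  continuous_on A q -> continuous_on B q -> continuous_on (A `|` B) q.
Proof.
move=> cA cB /continuous_onP qA /continuous_onP qB; apply/continuous_onP.
exact: withinU_continuous.
Qed.

Lemma continuous_on_rev q :
  continuous_on (Icc 0 1) q -> continuous_on (Icc 0 1) (fun t => q (1 - t)).
Proof.
move=> cq t It.
have I1 : Icc 0 1 (1 - t).
  by move: It; rewrite /Icc /= => /andP[h1 h2]; apply/andP; split; lra.
have h : (fun u => 1 - u) @ within (Icc 0 1) (nbhs t) -->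
         within (Icc 0 1) (nbhs (1 - t)).
  apply: cvg_within_eventually.
    apply/(near_withinP (Icc 0 1)); exists 1 => // u.
    by rewrite /Icc /= => /andP[h1 h2] _; apply/andP; split; lra.
  apply: cvg_within_filter.
  by apply: cvgB; [exact: cvg_cst|exact: cvg_id].
exact: cvg_trans (cvg_fmap2 h) (cq _ I1).
Qed.

Lemma path_in_one_sheet (I : Type) (V : I -> set T) q (s b : R) :
  (forall i, open (V i)) -> (forall i j, i <> j -> V i `&` V j = set0) ->
  continuous_on [set u | 0 <= u < b] q -> 0 <= s -> s < b ->
  (forall v, s <= v -> v < b -> exists i, V i (q v)) ->
  exists i, forall v, s <= v -> v < b -> V i (q v).
Proof.
move=> oV dV cq s0 sb inV.
have [i0 Vi0] := inV s (lexx s) sb; exists i0 => v sv vb.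
apply: (real_induction (a := s) (c := v) (A := fun w => V i0 (q w))) => //.
- move=> w sw wv IH; have [->//|wns] := eqVneq w s.
  have {}sw : s < w by rewrite lt_neqAle eq_sym wns sw.
  have [j Vj] := inV w (ltW sw) (le_lt_trans wv vb).
  have := cq w (ltac:(apply/andP; split; lra)) _
    (open_nbhs_nbhs (conj (oV j) Vj)).
  move=> /(near_withinP [set u | 0 <= u < b]) [e e0 He].
  have [u [su uw uwe]] := exists_close_left sw e0.
  have Vju : V j (q u).
    apply: He; first (apply/andP; split; lra).
    by rewrite ltr_norml; apply/andP; split; lra.
  have [->//|ne] := pselect (i0 = j).
  by have := dV _ _ ne; rewrite -subset0 => /(_ (q u) (conj (IH u su uw) Vju)).
- move=> w sw wv Vw.
  have := cq w (ltac:(apply/andP; split; lra)) _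
    (open_nbhs_nbhs (conj (oV i0) Vw)).
  move=> /(near_withinP [set u | 0 <= u < b]) [e e0 He].
  exists e => // u wu ue uv; apply: He; first (apply/andP; split; lra).
  by rewrite ltr_norml; apply/andP; split; lra.
Qed.

End continuous_on.

Section continuation.
Variables (R : realType) (X Y : topologicalType) (f : X -> Y).

Lemma continuation_property_eq (p p' : R -> Y) :
  (forall v, 0 <= v -> v <= 1 -> p v = p' v) ->
  continuation_property f p -> continuation_property f p'.
Proof.
move=> e CP b q hb cq fq.
have := hb; rewrite in_itv /= => /andP[b0 b1].
apply: CP hb cq _ => t ht.
move: (ht); rewrite in_itv /= => /andP[t0 tb].
by rewrite fq // e //; lra.
Qed.

Lemma continuation_seq (p : R -> Y) (b : R) (Q : R -> X) :
  continuation_property f p -> 0 < b -> b <= 1 ->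
  continuous_on [set u | 0 <= u < b] Q ->
  (forall u, 0 <= u -> u < b -> f (Q u) = p u) ->
  exists t : nat -> R, [/\ forall n, 0 <= t n < b, t @ \oo --> b &
     exists l : X, (Q \o t) @ \oo --> l].
Proof.
move=> CP b0 b1 cQ fQ.
have [t [Ht tb Hl]] := CP b Q (ltac:(by rewrite in_itv /= b0 b1))
  (ltac:(by rewrite set_itvco0E; apply/continuous_onP))
  (ltac:(by move=> u; rewrite in_itv /= => /andP[h1 h2]; apply: fQ)).
by exists t; split => // n; have := Ht n; rewrite in_itv.
Qed.

End continuation.

Section path_lifting.
Variables (R : realType) (X Y : metricType R) (f : X -> Y).
Hypothesis lh : local_homeomorphism f.

Definition local_inverse (V : set X) (g : Y -> X) :=
  [/\ open V, open (f @` V), (forall z, V z -> g (f z) = z),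
      (forall y, (f @` V) y -> V (g y) /\ f (g y) = y) &
      {in f @` V, continuous g}].

Lemma local_homeo_chart x : exists V g, V x /\ local_inverse V g.
Proof.
have [V [oV Vx oW [bij cf [g [gW cg]]]]] := lh x.
exists V, g; split => //; split => //.
- move=> z Vz; have fzW : (f @` V) (f z) by exists z.
  have [Vg fg] := gW _ (mem_set fzW).
  by apply: (set_bij_inj bij) => //; apply: mem_set.
- by move=> y Wy; apply: gW; apply: mem_set.
- by rewrite -continuous_open_subspace.
Qed.

Lemma local_homeo_continuous : continuous f.
Proof.
move=> x; have [V [oV Vx oW [bij cf _]]] := lh x.
by move: cf; rewrite continuous_open_subspace //; apply; exact: mem_set.
Qed.

Lemma lift_unique (q1 q2 : R -> X) (a c : R) :
  continuous_on (Icc a c) q1 -> continuous_on (Icc a c) q2 ->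
  (forall s, a <= s -> s <= c -> f (q1 s) = f (q2 s)) -> q1 a = q2 a ->
  forall s, a <= s -> s <= c -> q1 s = q2 s.
Proof.
move=> c1 c2 fq qa; apply: real_induction.
  move=> t a_t tc IH; have [->//|ta] := eqVneq t a.
  have {}a_t : a < t by rewrite lt_neqAle eq_sym ta.
  have Ht : Icc a c t by rewrite /Icc /= (ltW a_t) tc.
  have left1 : q1 @ t^'- --> q1 t.
    by apply: cvg_trans (c1 t Ht); apply: cvg_fmap2; exact: at_left_within_Icc.
  have left2 : q2 @ t^'- --> q2 t.
    by apply: cvg_trans (c2 t Ht); apply: cvg_fmap2; exact: at_left_within_Icc.
  have left21 : q2 @ t^'- --> q1 t.
    apply: cvg_trans left1; apply: near_eq_cvg.
    by apply: (near_at_left a_t) => s hs1 hs2; apply: IH => //; apply: ltW.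
  exact: (@cvg_unique X (@metric_hausdorff _ X) _ _ _ _ left21 left2).
move=> t a_t tc eqt.
have [V [g [Vx [oV _ gf _ _]]]] := local_homeo_chart (q1 t).
have Ht : Icc a c t by rewrite /Icc /= a_t (ltW tc).
have n1 : \forall s \near within (Icc a c) (nbhs t), V (q1 s).
  exact: c1 t Ht V (open_nbhs_nbhs (conj oV Vx)).
have Vx2 : V (q2 t) by rewrite -eqt.
have n2 : \forall s \near within (Icc a c) (nbhs t), V (q2 s).
  exact: c2 t Ht V (open_nbhs_nbhs (conj oV Vx2)).
have [e e0 He] := (near_withinP _ _ _).1 (filterI n1 n2).
exists e => // s ts tse sc.
have Hs : Icc a c s by rewrite /Icc /= (le_trans a_t (ltW ts)) sc.
have [V1 V2] := He s Hs (ltac:(rewrite ger0_norm; lra)).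
by rewrite -(gf _ V1) -(gf _ V2) fq // (le_trans a_t (ltW ts)).
Qed.

Definition lift_on (p : R -> Y) (x0 : X) (c : R) (q : R -> X) :=
  [/\ continuous_on (Icc 0 c) q, q 0 = x0 &
      forall s, 0 <= s -> s <= c -> f (q s) = p s].

Lemma lift_on0 (p : R -> Y) (x0 : X) : f x0 = p 0 -> lift_on p x0 0 (fun=> x0).
Proof.
move=> fx0; split; [exact: continuous_on_cst|by []|].
by move=> s s0 s0'; have -> : s = 0 by apply/eqP; rewrite eq_le s0 s0'.
Qed.

Lemma lift_extend (p : R -> Y) (x0 : X) (Q : R -> X) (s0 t1 : R) (V : set X)
    (g : Y -> X) :
  0 <= s0 -> s0 <= t1 -> lift_on p x0 s0 Q -> continuous_on (Icc s0 t1) p ->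
  local_inverse V g -> (forall v, s0 <= v -> v <= t1 -> (f @` V) (p v)) ->
  V (Q s0) -> exists q, lift_on p x0 t1 q.
Proof.
move=> s0p s0t1 [cQ Q0 fQ] cp [_ _ gf fg cg] pW VQ.
pose q v := if v <= s0 then Q v else g (p v).
have cq1 : continuous_on (Icc 0 s0) q.
  by apply: continuous_on_eq cQ => v; rewrite /Icc /q /= => /andP[_ ->].
have cq2 : continuous_on (Icc s0 t1) q.
  apply: continuous_on_eq (continuous_on_comp cp _ cg).
    move=> v; rewrite /Icc /q /= => /andP[h1 h2]; case: ifP => //= vs.
    have -> : v = s0 by apply/eqP; rewrite eq_le vs h1.
    by rewrite -fQ // gf.
  by move=> v; rewrite /Icc /= => /andP[h1 h2]; apply: pW.
exists q; split.
- rewrite (Icc_split s0p s0t1).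
  by apply: continuous_on_setU => //; exact: closed_Icc.
- by rewrite /q s0p.
- move=> s sp st; rewrite /q; case: ifP => ss0; first exact: fQ.
  have s0s : s0 <= s by apply: ltW; rewrite ltNge ss0.
  by have [] := fg _ (pW s s0s st).
Qed.

Lemma lift_beyond (p : R -> Y) (x0 : X) (t : R) (q : R -> X) :
  continuous_on (Icc 0 1) p -> 0 <= t -> t < 1 -> lift_on p x0 t q ->
  exists2 e, 0 < e &
    forall s, t < s -> s < t + e -> s <= 1 -> exists q', lift_on p x0 s q'.
Proof.
move=> cp t0 t1 [cq q0 fq].
have [V [g [Vl chart]]] := local_homeo_chart (q t).
have [_ oW _ _ _] := chart.
have Wpt : (f @` V) (p t) by exists (q t) => //; apply: fq.
have := cp t (ltac:(rewrite /Icc /=; apply/andP; split; lra)) _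
  (open_nbhs_nbhs (conj oW Wpt)).
move=> /(near_withinP (Icc 0 1)) [e e0 He].
exists e => // s ts tse s1.
apply: (lift_extend (s0 := t) (Q := q) _ _ _ _ chart) => //.
- lra.
- apply: continuous_onW cp => v; rewrite /Icc /= => /andP[h1 h2].
  by apply/andP; split; lra.
- move=> v h1 h2; apply: He; first (rewrite /Icc /=; apply/andP; split; lra).
  by rewrite ltr_norml; apply/andP; split; lra.
Qed.

Lemma lifts_glue (p : R -> Y) (x0 : X) (t : R) : 0 < t ->
  (forall s, 0 <= s -> s < t -> exists q, lift_on p x0 s q) ->
  exists Q, [/\ continuous_on [set u | 0 <= u < t] Q, Q 0 = x0 &
                forall u, 0 <= u -> u < t -> f (Q u) = p u].
Proof.
move=> t0 IH.
have : forall s, exists q, 0 <= s < t -> lift_on p x0 s q.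
  move=> s; have [/andP[h1 h2]|_] := boolP (0 <= s < t).
    by have [q hq] := IH s h1 h2; exists q.
  by exists (fun=> x0).
move=> /choice [L HL].
have L_compat s1 s2 u : 0 <= s1 -> s1 <= s2 -> s2 < t -> 0 <= u -> u <= s1 ->
    L s1 u = L s2 u.
  move=> h1 h2 h3 h4 h5.
  have [c1 e1 f1] := HL s1 (ltac:(apply/andP; split; lra)).
  have [c2 e2 f2] := HL s2 (ltac:(apply/andP; split; lra)).
  apply: lift_unique c1 _ _ _ u h4 h5.
  - apply: continuous_onW c2 => v; rewrite /Icc /= => /andP[v1 v2].
    by apply/andP; split; lra.
  - by move=> s q1 q2; rewrite f1 // f2 //; lra.
  - by rewrite e1 e2.
pose Q u := L ((u + t) / 2) u.
have QL s u : 0 <= s -> s < t -> 0 <= u -> u <= s -> Q u = L s u.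
  move=> h1 h2 h3 h4; rewrite /Q.
  have [ms|sm] := leP ((u + t) / 2) s; first by apply: L_compat => //; lra.
  by symmetry; apply: L_compat => //; lra.
exists Q; split.
- move=> u /andP[u0 ut]; set s := (u + t) / 2.
  have [cL _ _] := HL s (ltac:(apply/andP; split; rewrite /s; lra)).
  rewrite (QL s u) /s; try lra.
  apply: cvg_trans (cL u (ltac:(rewrite /Icc /= u0 /s; lra))).
  apply: cvg_trans (near_eq_cvg _).
    apply: cvg_fmap2; apply: within_nearW.
    apply/nbhs_ballP; exists (s - u) => /=; first (rewrite /s; lra).
    move=> v; rewrite -ball_normE /= ltr_norml => /andP[h1 h2] /andP[h3 h4].
    by rewrite /Icc /=; apply/andP; split; lra.
  apply/(near_withinP (Icc 0 s)); exists 1 => // v /andP[v0 vt] _.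
  by symmetry; apply: QL => //; rewrite /s; lra.
- by rewrite (QL 0 0) //; have [] := HL 0 (ltac:(apply/andP; split; lra)).
- move=> u u0 ut; rewrite (QL u u) //.
  by have [_ _ ->] := HL u (ltac:(apply/andP; split; lra)).
Qed.

Lemma lift_at_limit (p : R -> Y) (x0 : X) (t : R) (Q : R -> X) :
  continuous_on (Icc 0 1) p -> continuation_property f p -> 0 < t -> t <= 1 ->
  continuous_on [set u | 0 <= u < t] Q -> Q 0 = x0 ->
  (forall u, 0 <= u -> u < t -> f (Q u) = p u) ->
  exists q, lift_on p x0 t q.
Proof.
move=> cp CP t0 t1 cQ Q0 fQ.
have [tn [Htn tnt [l Ql]]] := continuation_seq CP t0 t1 cQ fQ.
have ptn : (p \o tn) @ \oo --> p t.
  apply: cvg_comp (cp t _); last by rewrite /Icc /=; apply/andP; split; lra.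
  apply: cvg_within_eventually tnt; apply: filterE => n.
  by have /andP[h3 h4] := Htn n; rewrite /Icc /=; apply/andP; split; lra.
have flp : f l = p t.
  have fQtn : (f \o (Q \o tn)) @ \oo --> f l.
    by apply: continuous_cvg => //; apply: local_homeo_continuous.
  have fQp : f \o (Q \o tn) = p \o tn.
    by apply: funext => n /=; have /andP[h3 h4] := Htn n; apply: fQ.
  rewrite fQp in fQtn.
  exact: (@cvg_unique Y (@metric_hausdorff _ Y) _ _ _ _ fQtn ptn).
have [V [g [Vl chart]]] := local_homeo_chart l.
have [oV oW _ _ _] := chart.
have Wpt : (f @` V) (p t) by exists l.
have := cp t (ltac:(rewrite /Icc /=; apply/andP; split; lra)) _
  (open_nbhs_nbhs (conj oW Wpt)).
move=> /(near_withinP (Icc 0 1)) [e e0 He].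
have n1 : \forall n \near \oo, V ((Q \o tn) n).
  exact: Ql _ (open_nbhs_nbhs (conj oV Vl)).
have n2 : \forall n \near \oo, ball t e (tn n) by move/cvg_ballP : tnt; apply.
have [n [Vn]] := filter_ex (filterI n1 n2).
rewrite -ball_normE /= ltr_norml => /andP[b1 b2].
have /andP[sn0 snt] := Htn n.
apply: (lift_extend (s0 := tn n) (Q := Q) _ _ _ _ chart) => //.
- lra.
- split => //; last by move=> s s0 s1; apply: fQ; lra.
  apply: continuous_onW cQ => v; rewrite /Icc /= => /andP[h1 h2].
  by apply/andP; split; lra.
- apply: continuous_onW cp => v; rewrite /Icc /= => /andP[h1 h2].
  by apply/andP; split; lra.
- move=> v h1 h2; apply: He; first (rewrite /Icc /=; apply/andP; split; lra).
  by rewrite ltr_norml; apply/andP; split; lra.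
Qed.

Lemma lift_exists (p : R -> Y) (x0 : X) :
  continuous_on (Icc 0 1) p -> continuation_property f p -> f x0 = p 0 ->
  exists q, lift_on p x0 1 q.
Proof.
move=> cp CP fx0.
suff : forall t, 0 <= t -> t <= 1 -> exists q, lift_on p x0 t q by apply; lra.
apply: real_induction => [t t0 t1 IH|t t0 t1 [q hq]].
- have [->|tn0] := eqVneq t 0; first by exists (fun=> x0); exact: lift_on0.
  have {}t0 : 0 < t by rewrite lt_neqAle eq_sym tn0 t0.
  have [Q [cQ Q0 fQ]] := lifts_glue t0 IH.
  exact: lift_at_limit cp CP t0 t1 cQ Q0 fQ.
- exact: lift_beyond cp t0 t1 hq.
Qed.

End path_lifting.

Lemma covering_continuation (R : realType) (X Y : topologicalType) (f : X -> Y)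
    (p : R -> Y) :
  covering_projection f -> continuous_on (Icc 0 1) p ->
  continuation_property f p.
Proof.
move=> [_ cov] cp b q; rewrite in_itv /= => /andP[b0 b1].
rewrite set_itvco0E => /continuous_onP cq fq.
have {}fq u : 0 <= u -> u < b -> f (q u) = p u.
  by move=> u0 ub; apply: fq; rewrite in_itv /= u0 ub.
have [U [oU Ub [I [V [oV dV UV hV]]]]] := cov (p b).
have := cp b (ltac:(rewrite /Icc /=; apply/andP; split; lra)) _
  (open_nbhs_nbhs (conj oU Ub)).
move=> /(near_withinP (Icc 0 1)) [e e0 He].
have [s [s0 sb sbe]] := exists_close_left b0 e0.
have Up v : s <= v -> v <= b -> U (p v).
  move=> h1 h2; apply: He; first (rewrite /Icc /=; apply/andP; split; lra).
  by rewrite ltr_norml; apply/andP; split; lra.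
have [i sheet] : exists i, forall v, s <= v -> v < b -> V i (q v).
  apply: (path_in_one_sheet oV dV cq s0 sb) => v h1 h2.
  have : (f @^-1` U) (q v) by rewrite /= fq; [apply: Up|..]; lra.
  by rewrite -UV => -[i _ Vi]; exists i.
have [bij _ [g [gU cg]]] := hV i.
have {}cg : {in U, continuous g} by rewrite -continuous_open_subspace.
have qg v : s <= v -> v < b -> q v = g (p v).
  move=> h1 h2; have [Vg fg] := gU _ (mem_set (Up v h1 (ltW h2))).
  apply: (set_bij_inj bij); [apply: mem_set; exact: sheet|exact: mem_set|].
  by rewrite fg fq //; lra.
pose t n := b - (b - s) * n.+1%:R^-1.
have tb n : s <= t n /\ t n < b by apply/andP; exact: subr_harmonic_itv.
exists t; split.
- by move=> n; rewrite in_itv /=; have [h1 h2] := tb n; apply/andP; split; lra.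
- exact: cvg_subr_harmonic.
- exists (g (p b)).
  have -> : q \o t = g \o (p \o t).
    by apply: funext => n /=; have [h1 h2] := tb n; apply: qg.
  apply: continuous_cvg; first by apply: cg; exact: mem_set.
  apply: cvg_comp (cp b _); last by rewrite /Icc /=; apply/andP; split; lra.
  apply: (@cvg_within_eventually _ _ \oo); last exact: cvg_subr_harmonic.
  apply: filterE => n; have [h1 h2] := tb n.
  by rewrite /Icc /=; apply/andP; split; lra.
Qed.

Section homotopy_lifting.
Variables (R : realType) (X Y : metricType R) (f : X -> Y).
Hypothesis lh : local_homeomorphism f.
Variables (y0 : Y) (U : set Y) (H : Y -> R -> Y).
Hypotheses (oU : open U)
  (cH : {within U `*` `[0, 1], continuous (fun z : Y * R => H z.1 z.2)})
  (Hy : forall y, U y -> H y 0 = y0 /\ H y 1 = y)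
  (cHy : forall y, U y -> continuous_on (Icc 0 1) (H y))
  (CPrev : forall y, U y -> continuation_property f (fun t => H y (1 - t))).

Lemma homotopy_near (y1 : Y) (t : R) (N : set Y) : U y1 -> 0 <= t -> t <= 1 ->
  nbhs (H y1 t) N -> exists2 e : R, 0 < e &
  \forall y \near y1, forall v, 0 <= v -> v <= 1 -> `|v - t| < e -> N (H y v).
Proof.
move=> Uy1 t0 t1 nN.
have := (subspace_continuousP _ _).1 cH (y1, t)
  (ltac:(split => //=; rewrite in_itv /= t0 t1 //)) N nN.
move=> [[A B] /= [nA /nbhs_ballP [e e0 Be]] AB].
exists e => //.
apply: filterS (filterI nA (open_nbhs_nbhs (conj oU Uy1))).
move=> y [Ay Uy] v v0 v1 ve.
apply: (AB (y, v)).
- by split => //; apply: Be; rewrite -ball_normE /= distrC; exact: ve.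
- by split => //=; rewrite in_itv /= v0 v1.
Qed.

Lemma homotopy_continuous_at (y1 : Y) (v : R) : U y1 -> 0 <= v -> v <= 1 ->
  (fun y => H y v) @ y1 --> H y1 v.
Proof.
move=> Uy1 v0 v1 N nN.
have [e e0 h] := homotopy_near Uy1 v0 v1 nN.
by apply: filterS h => y /(_ v v0 v1); apply; rewrite subrr normr0.
Qed.

Section lifted_homotopy.
Variable l : X -> Y -> R -> X.
Hypothesis hl : forall x y, f x = y0 -> U y -> lift_on f (H y) x 1 (l x y).

Lemma lift_end_fibre x y : f x = y0 -> U y -> f (l x y 1) = y.
Proof.
by move=> fx Uy; have [_ _ fl] := hl fx Uy; rewrite fl //; have [_ ->] := Hy Uy.
Qed.

(* Near y1 the lifts coincide with g \o H y on [s0, s1], by uniqueness. *)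
Lemma lift_continuity_propagates (x : X) (y1 : Y) (s0 s1 : R) (V : set X)
    (g : Y -> X) :
  f x = y0 -> U y1 -> 0 <= s0 -> s0 <= s1 -> s1 <= 1 ->
  (fun y => l x y s0) @ y1 --> l x y1 s0 ->
  local_inverse f V g -> V (l x y1 s0) ->
  (\forall y \near y1, forall v, s0 <= v -> v <= s1 -> (f @` V) (H y v)) ->
  forall v, s0 <= v -> v <= s1 -> (fun y => l x y v) @ y1 --> l x y1 v.
Proof.
move=> fx Uy1 s00 s01 s11 Cs0 [oV _ gf fg cg] Vl nW v v0 v1.
have nV : \forall y \near y1, V (l x y s0) := Cs0 _ (open_nbhs_nbhs (conj oV Vl)).
have nU : \forall y \near y1, U y := open_nbhs_nbhs (conj oU Uy1).
have lg : \forall y \near y1,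
    forall w, s0 <= w -> w <= s1 -> l x y w = g (H y w).
  apply: filterS (filterI nV (filterI nU nW)) => y [Vy [Uy Wy]].
  have [cl l0 fl] := hl fx Uy.
  apply: (lift_unique lh (q1 := l x y) (q2 := g \o H y) (a := s0) (c := s1)).
  - apply: continuous_onW cl => w; rewrite /Icc /= => /andP[h1 h2].
    by apply/andP; split; lra.
  - apply: continuous_on_comp (continuous_onW _ (cHy Uy)) _ cg.
      by move=> w; rewrite /Icc /= => /andP[h1 h2]; apply/andP; split; lra.
    by move=> w; rewrite /Icc /= => /andP[h1 h2]; apply: Wy.
  - move=> w h1 h2 /=; have -> : f (l x y w) = H y w by apply: fl; lra.
    by have [_ ->] := fg _ (Wy w h1 h2).
  - have -> : (g \o H y) s0 = g (f (l x y s0)) by rewrite /= fl //; lra.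
    by rewrite gf.
rewrite ((nbhs_singleton lg) v v0 v1).
apply: cvg_trans (near_eq_cvg _) _.
  by apply: filterS lg => y /(_ v v0 v1) ->.
have Hv := homotopy_continuous_at Uy1 (le_trans s00 v0) (le_trans v1 s11).
apply: (continuous_cvg _ _ Hv).
by apply: cg; apply: mem_set; apply: (nbhs_singleton nW).
Qed.

Lemma lift_chart_near (x : X) (y1 : Y) (t : R) : f x = y0 -> U y1 ->
  0 <= t -> t <= 1 -> exists V g, [/\ local_inverse f V g, V (l x y1 t) &
  exists2 e : R, 0 < e & \forall y \near y1,
    forall v, 0 <= v -> v <= 1 -> `|v - t| < e -> (f @` V) (H y v)].
Proof.
move=> fx Uy1 t0 t1; have [_ _ fl] := hl fx Uy1.
have [V [g [Vz chart]]] := local_homeo_chart lh (l x y1 t).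
have [_ oW _ _ _] := chart.
have WH : (f @` V) (H y1 t) by exists (l x y1 t) => //; apply: fl.
exists V, g; split => //.
exact: homotopy_near Uy1 t0 t1 (open_nbhs_nbhs (conj oW WH)).
Qed.

Lemma lift_continuous_in_base (x : X) (y1 : Y) : f x = y0 -> U y1 ->
  forall t, 0 <= t -> t <= 1 -> (fun y => l x y t) @ y1 --> l x y1 t.
Proof.
move=> fx Uy1; have [cl l0 fl] := hl fx Uy1.
apply: real_induction => [t t0 t1 IH|t t0 t1 Ct].
- have [->|tn0] := eqVneq t 0.
    have nU : \forall y \near y1, U y := open_nbhs_nbhs (conj oU Uy1).
    rewrite l0; apply: cvg_trans (near_eq_cvg _) (cvg_cst x).
    by apply: filterS nU => y Uy; have [_ -> _] := hl fx Uy.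
  have {}t0 : 0 < t by rewrite lt_neqAle eq_sym tn0 t0.
  have [V [g [chart Vz [e e0 nW]]]] := lift_chart_near fx Uy1 (ltW t0) t1.
  have [oV _ _ _ _] := chart.
  have := cl t (ltac:(rewrite /Icc /=; apply/andP; split; lra)) _
    (open_nbhs_nbhs (conj oV Vz)).
  move=> /(near_withinP (Icc 0 1)) [e2 e20 He2].
  have e_min : 0 < Num.min e e2 by rewrite lt_min e0 e20.
  have [s0 [s00 s0t]] := exists_close_left t0 e_min.
  rewrite lt_min => /andP[se se2].
  have Vs0 : V (l x y1 s0).
    apply: He2; first (rewrite /Icc /=; apply/andP; split; lra).
    by rewrite ltr_norml; apply/andP; split; lra.
  have nW' : \forall y \near y1, forall v, s0 <= v -> v <= t -> (f @` V) (H y v).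
    apply: filterS nW => y h v h1 h2; apply: h; try lra.
    by rewrite ltr_norml; apply/andP; split; lra.
  exact: (lift_continuity_propagates fx Uy1 s00 (ltW s0t) t1 (IH s0 s00 s0t)
    chart Vs0 nW' (ltW s0t) (lexx t)).
- have [V [g [chart Vz [e e0 nW]]]] := lift_chart_near fx Uy1 t0 (ltW t1).
  exists e => // s ts tse s1.
  have nW' : \forall y \near y1, forall v, t <= v -> v <= s -> (f @` V) (H y v).
    apply: filterS nW => y h v h1 h2; apply: h; try lra.
    by rewrite ltr_norml; apply/andP; split; lra.
  exact: (lift_continuity_propagates fx Uy1 t0 (ltW ts) s1 Ct chart Vz nW'
    (ltW ts) (lexx s)).
Qed.

Lemma lift_end_injective (x1 x2 : X) (y : Y) : f x1 = y0 -> f x2 = y0 -> U y ->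
  l x1 y 1 = l x2 y 1 -> x1 = x2.
Proof.
move=> f1 f2 Uy e.
have [c1 s1 g1] := hl f1 Uy; have [c2 s2 g2] := hl f2 Uy.
have := lift_unique lh (q1 := fun t => l x1 y (1 - t))
  (q2 := fun t => l x2 y (1 - t)) (a := 0) (c := 1)
  (continuous_on_rev c1) (continuous_on_rev c2).
move=> /(_ _ _ 1 ler01 (lexx 1)); rewrite subrr s1 s2; apply.
- by move=> t t0 t1; rewrite g1 ?g2 //; lra.
- by rewrite subr0.
Qed.

Lemma lift_end_surjective (w : X) : U (f w) ->
  exists2 x, f x = y0 & l x (f w) 1 = w.
Proof.
move=> Uy; set y := f w.
have [H0 H1] := Hy Uy.
have cr := continuous_on_rev (cHy Uy).
have fw : f w = (fun t => H y (1 - t)) 0 by rewrite /= subr0 H1.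
have [q [cq q0 fq]] := lift_exists lh cr (CPrev Uy) fw.
have fx : f (q 1) = y0 by rewrite fq // subrr.
exists (q 1) => //.
have [cl l0 fl] := hl fx Uy.
have := lift_unique lh (q1 := l (q 1) y) (q2 := fun t => q (1 - t)) (a := 0)
  (c := 1) cl (continuous_on_rev cq).
move=> /(_ _ _ 1 ler01 (lexx 1)) ->; first by rewrite subrr.
- move=> t t0 t1; rewrite fl //.
  have -> : f (q (1 - t)) = H (f w) (1 - (1 - t)) by apply: fq; lra.
  by rewrite opprB addrC subrK.
- by rewrite subr0 l0.
Qed.

Lemma open_lift_end_image (x : X) : f x = y0 -> open ((fun y => l x y 1) @` U).
Proof.
move=> fx; rewrite openE => z [y Uy <-].
have [V [g [Vz [oV _ gf _ _]]]] := local_homeo_chart lh (l x y 1).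
have nN : nbhs y ((fun y' => l x y' 1) @^-1` V `&` U).
  apply: filterI; last exact: open_nbhs_nbhs (conj oU Uy).
  have cy := lift_continuous_in_base fx Uy ler01 (lexx 1).
  exact: cy V (open_nbhs_nbhs (conj oV Vz)).
have nf : nbhs (l x y 1) (f @^-1` ((fun y' => l x y' 1) @^-1` V `&` U)).
  by apply: (local_homeo_continuous lh); rewrite lift_end_fibre.
change (nbhs (l x y 1) ((fun y => l x y 1) @` U)).
apply: filterS (filterI (open_nbhs_nbhs (conj oV Vz)) nf) => w [Vw [Vs Ufw]].
exists (f w) => //.
by rewrite -(gf _ Vs) lift_end_fibre // gf.
Qed.

Lemma lift_ends_evenly_cover : evenly_covered f U.
Proof.
exists {x : X | f x = y0}, (fun i => (fun y => l (sval i) y 1) @` U); split.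
- by move=> [x fx]; exact: open_lift_end_image.
- move=> [xi fi] [xj fj] /= nij; apply/seteqP; split => // w.
  move=> [[y Uy <-] [y' Uy' e]].
  have ey : y' = y by rewrite -(lift_end_fibre fj Uy') e lift_end_fibre.
  rewrite ey in e; have exij := lift_end_injective fj fi Uy e.
  by apply: nij; subst xj; congr exist; apply: Prop_irrelevance.
- apply/seteqP; split => w.
    by move=> [[x fx] _ [y Uy <-]] /=; rewrite lift_end_fibre.
  move=> Ufw; have [x fx e] := lift_end_surjective Ufw.
  by exists (exist _ x fx) => //; exists (f w).
- move=> [x fx] /=; split.
  + split.
    * by move=> _ [y Uy <-]; rewrite lift_end_fibre.
    * move=> a b /set_mem [y Uy <-] /set_mem [y' Uy' <-].
      by rewrite !lift_end_fibre // => ->.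
    * by move=> y Uy; exists (l x y 1); [exists y|rewrite lift_end_fibre].
  + exact: continuous_subspaceT (local_homeo_continuous lh).
  + exists (fun y => l x y 1); split.
      by move=> y /set_mem Uy; split; [exists y|rewrite lift_end_fibre].
    apply: continuous_in_subspaceT => y /set_mem Uy.
    exact: (lift_continuous_in_base fx Uy ler01 (lexx 1)).
Qed.

End lifted_homotopy.

Lemma contractible_evenly_covered :
  (forall y, U y -> continuation_property f (H y)) -> evenly_covered f U.
Proof.
move=> CP.
have : forall xy : X * Y, exists q : R -> X,
    f xy.1 = y0 -> U xy.2 -> lift_on f (H xy.2) xy.1 1 q.
  move=> [x y] /=; have [[fx Uy]|nxy] := pselect (f x = y0 /\ U y).
    have [q hq] := lift_exists lh (cHy Uy) (CP y Uy) (etrans fx (esym (Hy Uy).1)).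
    by exists q.
  by exists (fun=> x) => fx Uy; exfalso; apply: nxy.
move=> /choice [L HL].
apply: (lift_ends_evenly_cover (l := fun x y => L (x, y))) => x y fx Uy.
exact: (HL (x, y) fx Uy).
Qed.

End homotopy_lifting.

Section path_family.
Variables (R : realType) (Y : topologicalType) (P : set (R -> Y)).

Lemma in_family_continuous q : path_family P -> in_family P q ->
  continuous_on (Icc 0 1) q.
Proof.
move=> pf [p Pp e]; apply: continuous_on_eq (_ : continuous_on _ p).
  by move=> v Iv; rewrite e // inE set_itvccE.
by apply/continuous_onP; rewrite -set_itvccE; exact: pf.
Qed.

Lemma in_family_continuation {X : topologicalType} (f : X -> Y) q :
  (forall p, P p -> continuation_property f p) -> in_family P q ->
  continuation_property f q.
Proof.
move=> CP [p Pp e]; apply: continuation_property_eq (CP p Pp) => v v0 v1.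
by apply: e; rewrite in_itv /= v0 v1.
Qed.

Lemma in_family_rev q :
  (forall p, P p -> in_family P (fun t => p (1 - t))) -> in_family P q ->
  in_family P (fun t => q (1 - t)).
Proof.
move=> Prev [p Pp e]; have [p' Pp' e'] := Prev p Pp.
exists p' => // v Iv; rewrite e' //; apply: e.
by move: Iv; rewrite !in_itv /= => /andP[h1 h2]; apply/andP; split; lra.
Qed.

End path_family.

Unset Implicit Arguments.

Theorem theorem1 (R : realType) (X Y : metricType R) (f : X -> Y)
    (P : set (R -> Y)) :
  path_family P ->
  local_homeomorphism f ->
  P_connected P ->
  locally_P_contractible P ->
  (covering_projection f <-> forall p, P p -> continuation_property f p).
Proof.
(* P-connectedness would give surjectivity, which covering_projection does
   not ask for. *)
move=> pf lh [Prev _] lc.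
split=> [cov p Pp|CP].
  apply: covering_continuation cov (in_family_continuous pf _).
  by exists p => //; move=> v _.
split; first exact: local_homeo_continuous lh.
move=> y0; have [U [H [[oU Uy0] cH _ _ Hy]]] := lc y0.
exists U; split => //.
apply: (contractible_evenly_covered (y0 := y0) lh oU cH) => y /Hy [H0 H1 PH].
- by split.
- exact: in_family_continuous pf PH.
- exact: in_family_continuation CP (in_family_rev Prev PH).
- exact: in_family_continuation CP PH.
Qed.
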